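(* Let $H_1$ and $H_2$ be simple, undirected, connected graphs on the same vertex set $V$, each of girth at least $6$, such that $H_1^2 = H_2^2$ (equal as graphs on $V$). Then $H_1$ and $H_2$ are isomorphic.
   Context: For a simple, undirected, connected graph $H$, its square $H^2$ is the graph on the same vertex set in which two distinct vertices are adjacent if and only if their distance in $H$ is at most $2$. The girth of a graph is the length of its shortest cycle ($\infty$ for a tree). *)

From mathcomp Require Import all_boot.
Set Implicit Arguments. Unset Strict Implicit. Unset Printing Implicit Defensive.

Definition simple_graph (V : finType) (e : rel V) : Prop :=
  symmetric e /\ irreflexive e.

Definition connected_graph (V : finType) (e : rel V) : Prop :=
  forall x y : V, connect e x y.

Definition has_cycle_of_length (V : finType) (e : rel V) (k : nat) : Prop :=
  exists s : seq V, [/\ size s = k, 3 <= k, uniq s & cycle e s].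

(* girth >= g : no cycle of length < g (a tree has girth infinity). *)
Definition girth_at_least (V : finType) (e : rel V) (g : nat) : Prop :=
  forall k, k < g -> ~ has_cycle_of_length e k.

Definition sq_graph (V : finType) (e : rel V) : rel V :=
  fun x y => (x != y) && (e x y || [exists z, e x z && e z y]).

Definition graph_iso (V W : finType) (e1 : rel V) (e2 : rel W) : Prop :=
  exists f : V -> W, bijective f /\ forall x y, e1 x y = e2 (f x) (f y).

From mathcomp Require Import all_boot.

Set Implicit Arguments.
Unset Strict Implicit.
Unset Printing Implicit Defensive.

(* In a graph of girth at least 6, a vertex within distance 2 of both ends of
   an edge xy is adjacent to x or to y, and a neighbour of x other than y is at
   distance at least 3 from a neighbour of y other than x.  Since H1 and H2
   have the same square, these facts show that if some vertex has the same
   neighbourhood in H1 and H2 then so do its H1-neighbours, hence H1 = H2 by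
   connectivity.  Otherwise the edges common to H1 and H2 form a matching, and
   across a common edge xy the two graphs exchange the other neighbours of x
   and of y; so the involution swapping the ends of every common edge and
   fixing all other vertices maps H1 onto H2. *)

Lemma graph_iso_involutive (T : finType) (e1 e2 : rel T) (f : T -> T) :
  involutive f -> {homo f : x y / e1 x y >-> e2 x y} ->
  {homo f : x y / e2 x y >-> e1 x y} -> graph_iso e1 e2.
Proof.
move=> fK f12 f21; exists f; split; first by exists f.
by move=> x y; apply/idP/idP => [/f12 // | /f21]; rewrite !fK.
Qed.

Section Girth6.

Variables (V : finType) (e : rel V).

Lemma sq_graph_path2 x y z : e x y -> e y z -> x != z -> sq_graph e x z.
Proof.
by move=> xy yz xz; rewrite /sq_graph xz /=; apply/orP; right; apply/existsP; exists y; rewrite xy.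
Qed.

Hypotheses (e_simple : simple_graph e) (e_girth : girth_at_least e 6).

Lemma adj_sym x y : e x y -> e y x.
Proof. by case: e_simple => e_sym _; rewrite e_sym. Qed.

Lemma adj_neq x y : e x y -> x != y.
Proof. by case: e_simple => _ e_irr xy; apply: contraTneq xy => ->; rewrite e_irr. Qed.

Lemma sq_graph_adj x y : e x y -> sq_graph e x y.
Proof. by move=> xy; rewrite /sq_graph (adj_neq xy) xy. Qed.

Lemma no_short_cycle (s : seq V) : uniq s -> 3 <= size s < 6 -> ~ cycle e s.
Proof. by move=> s_uniq /andP[s_ge3 s_lt6] s_cycle; apply: (e_girth s_lt6); exists s. Qed.

Lemma no_triangle a b c : e a b -> e b c -> e c a -> False.
Proof.
move=> ab bc ca; apply: (@no_short_cycle [:: a; b; c]) => //=; last by rewrite ab bc ca.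
by rewrite !inE negb_or (adj_neq ab) (adj_neq bc) eq_sym (adj_neq ca).
Qed.

Lemma no_square a b c d :
  e a b -> e b c -> e c d -> e d a -> a != c -> b != d -> False.
Proof.
move=> ab bc cd da ac bd; apply: (@no_short_cycle [:: a; b; c; d]) => //=.
  by rewrite !inE !negb_or (adj_neq ab) ac (adj_neq bc) bd (adj_neq cd) eq_sym (adj_neq da).
by rewrite ab bc cd da.
Qed.

Lemma no_pentagon a b c d f : e a b -> e b c -> e c d -> e d f -> e f a ->
  a != c -> a != d -> b != d -> b != f -> c != f -> False.
Proof.
move=> ab bc cd df fa ac ad bd bf cf.
apply: (@no_short_cycle [:: a; b; c; d; f]) => //=; last by rewrite ab bc cd df fa.
rewrite !inE !negb_or (adj_neq ab) ac ad (adj_neq bc) bd bf (adj_neq cd) cf.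
by rewrite (adj_neq df) eq_sym (adj_neq fa).
Qed.

Lemma sq_adj_ends x y z :
  e x y -> sq_graph e x z -> sq_graph e y z -> e x z \/ e y z.
Proof.
move=> xy /andP[xz /orP[xz_adj | /existsP[a /andP[xa az]]]]; first by left.
move=> /andP[yz /orP[yz_adj | /existsP[b /andP[yb bz]]]]; first by right.
have [<- | ay] := eqVneq a y; first by right.
have [<- | bx] := eqVneq b x; first by left.
have [ab | ab] := eqVneq a b.
  by subst b; case: (no_triangle xa (adj_sym yb) (adj_sym xy)).
exfalso; apply: (no_pentagon xa az (adj_sym bz) (adj_sym yb) (adj_sym xy));
  by rewrite // eq_sym.
Qed.

Lemma sq_graph_across x y a c :
  e x y -> e x a -> e y c -> a != y -> c != x -> ~~ sq_graph e a c.
Proof.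
move=> xy xa yc ay cx; apply/negP => /andP[ac /orP[ac_adj | /existsP[m /andP[am mc]]]].
  by apply: (no_square xa ac_adj (adj_sym yc) (adj_sym xy)); rewrite // eq_sym.
have [mx | mx] := eqVneq m x; first by subst m; apply: (no_triangle xy yc (adj_sym mc)).
have [my | my] := eqVneq m y; first by subst m; apply: (no_triangle xa am (adj_sym xy)).
by apply: (no_pentagon xa am mc (adj_sym yc) (adj_sym xy)); rewrite // eq_sym.
Qed.

End Girth6.

Section SameSquare.

Variables (V : finType) (e1 e2 : rel V).
Hypotheses (e1_simple : simple_graph e1) (e2_simple : simple_graph e2).
Hypotheses (e1_girth : girth_at_least e1 6) (e2_girth : girth_at_least e2 6).
Hypothesis sq_eq : sq_graph e1 =2 sq_graph e2.

Let sym1 := adj_sym e1_simple.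
Let sym2 := adj_sym e2_simple.

Lemma common_edge_split x y t :
  e1 x y -> e2 x y -> e1 y t -> t != x -> e2 x t \/ e2 y t.
Proof.
move=> xy1 xy2 yt1 tx; apply: (sq_adj_ends e2_simple e2_girth xy2); rewrite -sq_eq.
  by apply: sq_graph_path2 xy1 yt1 _; rewrite eq_sym.
exact: sq_graph_adj.
Qed.

Lemma common_edges_nbhd_sub x y s t :
  e1 x y -> e2 x y -> e1 x s -> e2 x s -> s != y -> e1 y t -> e2 y t.
Proof.
move=> xy1 xy2 xs1 xs2 sy yt1.
have [-> | tx] := eqVneq t x; first exact: sym2 xy2.
case: (common_edge_split xy1 xy2 yt1 tx) => // xt2; exfalso.
have [st | st] := eqVneq s t.
  by subst t; apply: (no_triangle e1_simple e1_girth xy1 yt1 (sym1 xs1)).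
have := sq_graph_path2 (sym2 xs2) xt2 st; rewrite -sq_eq.
by apply/negP; apply: sq_graph_across xy1 xs1 yt1 sy tx.
Qed.

Lemma same_nbhd_adj_sub x y t : e1 x =1 e2 x -> e1 x y -> e1 y t -> e2 y t.
Proof.
move=> same_x xy1 yt1; have xy2 : e2 x y by rewrite -same_x.
have [-> | tx] := eqVneq t x; first exact: sym2 xy2.
case: (common_edge_split xy1 xy2 yt1 tx) => // xt2; exfalso.
apply: (no_triangle e1_simple e1_girth xy1 yt1).
by apply: sym1; rewrite same_x.
Qed.

End SameSquare.

Definition partner (V : finType) (e1 e2 : rel V) (u : V) : V :=
  odflt u [pick w | e1 u w && e2 u w].

Lemma partnerC (V : finType) (e1 e2 : rel V) : partner e1 e2 =1 partner e2 e1.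
Proof.
by move=> u; rewrite /partner (eq_pick (Q := fun w => e2 u w && e1 u w)) // => w; rewrite andbC.
Qed.

Lemma partner_lone (V : finType) (e1 e2 : rel V) u :
  (forall w, ~~ (e1 u w && e2 u w)) -> partner e1 e2 u = u.
Proof. by move=> lone; rewrite /partner; case: pickP => // w; rewrite (negbTE (lone w)). Qed.

Section SameSquareBothWays.

Variables (V : finType) (e1 e2 : rel V).
Hypotheses (e1_simple : simple_graph e1) (e2_simple : simple_graph e2).
Hypotheses (e1_girth : girth_at_least e1 6) (e2_girth : girth_at_least e2 6).
Hypothesis sq_eq : sq_graph e1 =2 sq_graph e2.

Let sq_eq21 : sq_graph e2 =2 sq_graph e1 := fun x y => esym (sq_eq x y).
Let sym1 := adj_sym e1_simple.
Let sym2 := adj_sym e2_simple.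

Lemma same_nbhd_of_common_edges x y s :
  e1 x y -> e2 x y -> e1 x s -> e2 x s -> s != y -> e1 y =1 e2 y.
Proof.
move=> xy1 xy2 xs1 xs2 sy t; apply/idP/idP.
  exact: common_edges_nbhd_sub xy1 xy2 xs1 xs2 sy.
exact: (common_edges_nbhd_sub e2_simple e1_simple e2_girth e1_girth sq_eq21
  xy2 xy1 xs2 xs1 sy).
Qed.

Lemma same_nbhd_adj x y : e1 x =1 e2 x -> e1 x y -> e1 y =1 e2 y.
Proof.
move=> same_x xy1 t; apply/idP/idP; first exact: same_nbhd_adj_sub same_x xy1.
have same_x21 : e2 x =1 e1 x by move=> w; rewrite same_x.
have xy2 : e2 x y by rewrite -same_x.
exact: (same_nbhd_adj_sub e2_simple e1_simple e2_girth e1_girth sq_eq21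
  same_x21 xy2).
Qed.

Lemma same_nbhd_everywhere v : connected_graph e1 -> e1 v =1 e2 v -> e1 =2 e2.
Proof.
move=> e1_conn same_v u; case/connectP: (e1_conn v u) => p + ->.
elim: p v same_v => [|w p IHp] v same_v //= /andP[vw pw].
exact: IHp (same_nbhd_adj same_v vw) pw.
Qed.

Hypothesis nowhere_same : forall v, ~ e1 v =1 e2 v.

Lemma common_edge_adj12 x y z : e1 x y -> e2 x y -> e1 y z -> z != x -> e2 x z.
Proof.
move=> xy1 xy2 yz1 zx.
case: (common_edge_split e1_simple e2_simple e2_girth sq_eq xy1 xy2 yz1 zx) => // yz2.
by case: (nowhere_same (same_nbhd_of_common_edges (sym1 xy1) (sym2 xy2) yz1 yz2 zx)).
Qed.

Lemma common_edge_adj21 x y z : e1 x y -> e2 x y -> e2 x z -> z != y -> e1 y z.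
Proof.
move=> xy1 xy2 xz2 zy.
have := common_edge_split e2_simple e1_simple e1_girth sq_eq21 (sym2 xy2) (sym1 xy1) xz2 zy.
case=> // xz1.
by case: (nowhere_same (same_nbhd_of_common_edges xy1 xy2 xz1 xz2 zy)).
Qed.

Lemma common_edge_unique x y z : e1 x y -> e2 x y -> e1 x z -> e2 x z -> y = z.
Proof.
move=> xy1 xy2 xz1 xz2; have [-> // | zy] := eqVneq z y; exfalso.
exact: (no_triangle e1_simple e1_girth xy1 (common_edge_adj21 xy1 xy2 xz2 zy) (sym1 xz1)).
Qed.

Local Notation p := (partner e1 e2).

Lemma partner_common u w : e1 u w -> e2 u w -> p u = w.
Proof.
move=> uw1 uw2; rewrite /partner; case: pickP => [w' /andP[uw1' uw2'] | lone] /=.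
  exact: common_edge_unique uw1' uw2' uw1 uw2.
by move: (lone w); rewrite /= uw1 uw2.
Qed.

Lemma partnerK : involutive p.
Proof.
move=> u; case: (pickP (fun w => e1 u w && e2 u w)) => [w /andP[uw1 uw2] | lone].
  by rewrite (partner_common uw1 uw2) (partner_common (sym1 uw1) (sym2 uw2)).
by rewrite !partner_lone // => w; rewrite lone.
Qed.

Lemma partner_adj_matched u u' v : e1 u u' -> e2 u u' -> e1 u v -> e2 (p u) (p v).
Proof.
move=> uu1 uu2 uv1; rewrite (partner_common uu1 uu2).
have [-> | vu'] := eqVneq v u'.
  by rewrite (partner_common (sym1 uu1) (sym2 uu2)); apply: sym2.
have u'v2 := common_edge_adj12 (sym1 uu1) (sym2 uu2) uv1 vu'.
suff -> : p v = v by [].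
apply: partner_lone => w; apply/negP => /andP[vw1 vw2].
have [u'_eq_w | u'w] := eqVneq u' w.
  subst w; have := adj_neq e1_simple uv1.
  by rewrite (common_edge_unique (sym1 uu1) (sym2 uu2) (sym1 vw1) u'v2) eqxx.
have wu'1 := common_edge_adj21 vw1 vw2 (sym2 u'v2) u'w.
apply: (no_square e1_simple e1_girth uv1 vw1 wu'1 (sym1 uu1)) => //.
apply: contraTneq vu' => uw; subst w.
by rewrite (common_edge_unique uu1 uu2 uv1 (sym2 vw2)) eqxx.
Qed.

Lemma partner_adj : {homo p : x y / e1 x y >-> e2 x y}.
Proof.
move=> u v uv1.
case: (pickP (fun w => e1 u w && e2 u w)) => [u' /andP[uu1 uu2] | lone_u].
  exact: partner_adj_matched uu1 uu2 uv1.
case: (pickP (fun w => e1 v w && e2 v w)) => [v' /andP[vv1 vv2] | lone_v].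
  by apply: sym2; apply: partner_adj_matched vv1 vv2 (sym1 uv1).
exfalso; move: (sq_graph_adj e1_simple uv1); rewrite sq_eq.
case/andP => _ /orP[uv2 | /existsP[m /andP[um2 mv2]]].
  by move: (lone_u v); rewrite /= uv1 uv2.
have um1 : sq_graph e1 u m by rewrite sq_eq; apply: (sq_graph_adj e2_simple).
have vm1 : sq_graph e1 v m by rewrite sq_eq; apply: (sq_graph_adj e2_simple (sym2 mv2)).
case: (sq_adj_ends e1_simple e1_girth uv1 um1 vm1) => [um | vm].
  by move: (lone_u m); rewrite /= um um2.
by move: (lone_v m); rewrite /= vm (sym2 mv2).
Qed.

End SameSquareBothWays.

Theorem theorem1 (V : finType) (e1 e2 : rel V) :
  simple_graph e1 -> simple_graph e2 ->
  connected_graph e1 -> connected_graph e2 ->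
  girth_at_least e1 6 -> girth_at_least e2 6 ->
  sq_graph e1 =2 sq_graph e2 ->
  graph_iso e1 e2.
Proof.
move=> e1_simple e2_simple e1_conn _ e1_girth e2_girth sq_eq.
case: (boolP [exists v, [forall t, e1 v t == e2 v t]]).
  case/existsP=> v /forallP same_v.
  have e1_eq_e2 := same_nbhd_everywhere e1_simple e2_simple e1_girth e2_girth sq_eq
    e1_conn (fun t => eqP (same_v t)).
  by exists id; split; [exists id | move=> x y; rewrite e1_eq_e2].
move/existsPn=> nowhere.
have sq_eq21 : sq_graph e2 =2 sq_graph e1 by move=> x y; rewrite sq_eq.
have nowhere12 v : ~ e1 v =1 e2 v.
  by move=> same_v; move/negP: (nowhere v); apply; apply/forallP => t;
     rewrite same_v eqxx.
have nowhere21 v : ~ e2 v =1 e1 v by move=> same_v; apply: (nowhere12 v) => t; rewrite same_v.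
apply: (graph_iso_involutive (partnerK e1_simple e2_simple e1_girth e2_girth sq_eq nowhere12)).
  exact: partner_adj e1_simple e2_simple e1_girth e2_girth sq_eq nowhere12.
move=> x y xy2; rewrite !(partnerC e1 e2).
exact: (partner_adj e2_simple e1_simple e2_girth e1_girth sq_eq21 nowhere21 xy2).
Qed.
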